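(* Let $n\ge 3$, let $s_1,\dots,s_n$ be pairwise non-parallel lines through the origin in $\mathbb{R}^2$, and let $t(s_1,\dots,s_n)=k\pi$ (so $1\le k\le n-1$). Then $$\mathbf S_-\cong S^{n-k-2}\times D^{k-1},\qquad \mathbf S_+\cong S^{k-2}\times D^{n-k-1}$$ (homeomorphisms), so $\mathbf S(s_1,\dots,s_n)$ is homeomorphic to $S^{n-k-2}\times D^{k-1}\sqcup S^{k-2}\times D^{n-k-1}$. Here $D^m$ denotes the open $m$-dimensional disc, $D^0$ is a point, and $S^{-1}=\emptyset$.
   Context: For two lines $r,s$ through the origin, $\angle(r,s)$ is the minimal positive angle such that the counterclockwise rotation by $\angle(r,s)$ takes $r$ to $s$, and $t(s_1,\dots,s_n)=\sum_{i=1}^{n-1}\angle(s_i,s_{i+1})+\angle(s_n,s_1)$. For lines $e_1,\dots,e_n$ with $e_i$ parallel to $s_i$, $Q(e_1,\dots,e_n)$ is the closed polygon with consecutive vertices $v_i=e_i\cap e_{i+1}$ (indices mod $n$); $\widetilde{\mathbf S}(s_1,\dots,s_n)$ is the space of such polygons modulo translations. The oriented area of a polygon with vertices $v_i=(x_i,y_i)$ is $\mathcal A=\frac12\sum_i(x_iy_{i+1}-x_{i+1}y_i)$. The configuration space is $\mathbf S(s_1,\dots,s_n)=\{Q\in\widetilde{\mathbf S}:|\mathcal A(Q)|=1\}=\mathbf S_-\sqcup\mathbf S_+$, where $\mathbf S_\pm$ consists of the polygons with $\mathcal A(Q)=\pm1$. *)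

From Stdlib Require Import Reals Lra.
Open Scope R_scope.

Fixpoint sumR (n : nat) (f : nat -> R) : R :=
  match n with O => 0 | S m => sumR m f + f m end.

Definition nxt (n i : nat) : nat := Nat.modulo (S i) n.

(** ---------- Lines through the origin ----------
   A line through the origin is encoded by its angle theta in [0, pi):
   s = R * (cos theta, sin theta).  This encoding is bijective. *)

(** angle(r,s): the minimal positive angle alpha such that the
   counterclockwise rotation by alpha takes r to s, i.e. the minimal
   alpha > 0 with theta_r + alpha = theta_s (mod pi). *)
Definition ang (tr ts : R) : R :=
  if Rlt_dec tr ts then ts - tr else ts - tr + PI.

Definition tsum (n : nat) (theta : nat -> R) : R :=
  sumR n (fun i => ang (theta i) (theta (nxt n i))).

(** ---------- Lines parallel to s_i ----------
   Every line parallel to s_i is  e = { p | cos(theta_i) p2 - sin(theta_i) p1 = c }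
   for a unique offset c : R. *)
Definition on_line (th c : R) (p1 p2 : R) : Prop :=
  cos th * p2 - sin th * p1 = c.

(** ---------- Polygons ----------
   A polygon with n vertices is encoded by a point x of R^(2n):
   vertex v_i = (x (2i), x (2i+1)), for i < n.
   It is of the form Q(e_1,...,e_n) iff there are lines e_i parallel
   to s_i (offsets c i) with v_i = e_i ∩ e_{i+1} (indices mod n); since
   consecutive s_i are non-parallel the intersection is a single point,
   so "v_i lies on e_i and on e_{i+1}" means v_i = e_i ∩ e_{i+1}. *)
Definition vx (x : nat -> R) (i : nat) : R := x (2 * i)%nat.
Definition vy (x : nat -> R) (i : nat) : R := x (S (2 * i)).

Definition in_R (p : nat) (x : nat -> R) : Prop :=
  forall i, (p <= i)%nat -> x i = 0.

Definition is_Q (n : nat) (theta : nat -> R) (x : nat -> R) : Prop :=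
  exists c : nat -> R,
    forall i, (i < n)%nat ->
      on_line (theta i) (c i) (vx x i) (vy x i) /\
      on_line (theta (nxt n i)) (c (nxt n i)) (vx x i) (vy x i).

Definition area (n : nat) (x : nat -> R) : R :=
  / 2 * sumR n (fun i => vx x i * vy x (nxt n i) - vx x (nxt n i) * vy x i).

(** Polygons modulo translations: each translation class of polygons is
   represented by its unique member whose first vertex v_0 is the origin
   (a global continuous section of the quotient by the free translation
   action, so this subset of R^(2n) is homeomorphic to the quotient). *)
Definition Stilde (n : nat) (theta : nat -> R) (x : nat -> R) : Prop :=
  in_R (2 * n) x /\ is_Q n theta x /\ vx x 0 = 0 /\ vy x 0 = 0.

Definition Sminus n theta x : Prop := Stilde n theta x /\ area n x = -1.
Definition Splus  n theta x : Prop := Stilde n theta x /\ area n x = 1.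
Definition Sconf  n theta x : Prop := Stilde n theta x /\ Rabs (area n x) = 1.

Definition dist (p : nat) (x y : nat -> R) : R :=
  sqrt (sumR p (fun i => (x i - y i) ^ 2)).

Definition cont_on (p q : nat) (A : (nat -> R) -> Prop) (f : (nat -> R) -> (nat -> R)) :=
  forall x, A x -> forall eps, 0 < eps -> exists delta, 0 < delta /\
    forall y, A y -> dist p x y < delta -> dist q (f x) (f y) < eps.

(** A ⊆ R^p and B ⊆ R^q (all sets used below consist of points of
   R^p, resp. R^q, i.e. vanish beyond the first p, resp. q, coordinates). *)
Definition homeomorphic (p : nat) (A : (nat -> R) -> Prop)
                        (q : nat) (B : (nat -> R) -> Prop) : Prop :=
  exists (f g : (nat -> R) -> (nat -> R)),
    (forall x, A x -> B (f x)) /\ (forall y, B y -> A (g y)) /\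
    (forall x, A x -> g (f x) = x) /\ (forall y, B y -> f (g y) = y) /\
    cont_on p q A f /\ cont_on q p B g.

(** S^(a-1) x D^b  ⊆ R^(a+b): the unit sphere of R^a times the open unit
   ball of R^b.  For a = 0 the sphere S^(-1) is empty; for b = 0, D^0 is a point. *)
Definition SphDisc (a b : nat) (x : nat -> R) : Prop :=
  in_R (a + b) x /\
  sumR a (fun i => x i ^ 2) = 1 /\
  sumR b (fun i => x (a + i)%nat ^ 2) < 1.

(** Disjoint union of S^(a-1) x D^b and S^(a'-1) x D^b' (with a+b = a'+b' = d)
   realised in R^(1+d): first coordinate 0 tags the first piece, 1 the second. *)
Definition shift1 (x : nat -> R) : nat -> R := fun i => x (S i).
Definition DisjU (a b a' b' : nat) (x : nat -> R) : Prop :=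
  (x 0%nat = 0 /\ SphDisc a b (shift1 x)) \/
  (x 0%nat = 1 /\ SphDisc a' b' (shift1 x)).

(* Put the vertex v_0 at the origin and measure every vertex by its height
   g_j = cos(th_0) y_j - sin(th_0) x_j above the line e_0.  Then g_0 = g_(n-1) = 0,
   the heights g_1, ..., g_(n-2) are free, and each edge is recovered from the
   increment of the heights along it, so the polygons form a copy of R^(n-2).
   Telescoping the cross products of consecutive vertices gives
   A = sum_j c_j g_j^2 with c_j = -sin(th_(j+1) - th_j) / (2 sin(th_j - th_0) sin(th_(j+1) - th_0)),
   and an induction on the number of lines shows that exactly k - 1 of the c_j
   are positive.  So S_+ and S_- are the level sets {Q = 1} and {-Q = 1} of a
   diagonal quadratic form of signature (k - 1, n - k - 1), and
   {|u|^2 - |w|^2 = 1} is mapped onto S^(a-1) x D^b by dividing by sqrt(1 + |w|^2).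
   The two level sets are separated by the continuous function A. *)

From Stdlib Require Import Reals Lra Lia Psatz FunctionalExtensionality.
(* Imported last, so that [dist] is the Euclidean distance of [Defs], not [Rmetric.dist]. *)
From Pilot Require Import Defs.
Open Scope R_scope.

(** * Finite sums *)

Lemma sumR_S n f : sumR (S n) f = sumR n f + f n.
Proof. reflexivity. Qed.

Lemma sumR_ext n f g : (forall i, (i < n)%nat -> f i = g i) -> sumR n f = sumR n g.
Proof.
  induction n as [|n IH]; intros H; simpl; auto.
  rewrite IH by (intros; apply H; lia). rewrite H by lia. reflexivity.
Qed.

Lemma sumR_nonneg n f : (forall i, (i < n)%nat -> 0 <= f i) -> 0 <= sumR n f.
Proof.
  induction n as [|n IH]; intros H; simpl; [lra|].
  pose proof (H n ltac:(lia)); pose proof (IH ltac:(intros; apply H; lia)); lra.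
Qed.

Lemma sumR_scal n c f : sumR n (fun i => c * f i) = c * sumR n f.
Proof. induction n; simpl; lra. Qed.

Lemma sumR_sq_scal n (z : nat -> R) c :
  sumR n (fun i => (z i * c) ^ 2) = c ^ 2 * sumR n (fun i => z i ^ 2).
Proof. rewrite <- sumR_scal. apply sumR_ext; intros; ring. Qed.

Lemma sumR_split a b f : sumR (a + b) f = sumR a f + sumR b (fun i => f (a + i)%nat).
Proof.
  induction b as [|b IH]; [rewrite Nat.add_0_r; simpl; ring|].
  rewrite Nat.add_succ_r; simpl; rewrite IH; ring.
Qed.

Lemma sumR_shift n f : sumR (S n) f = f 0%nat + sumR n (fun i => f (S i)).
Proof. change (S n) with (1 + n)%nat. rewrite sumR_split. simpl. ring. Qed.

Lemma sumR_le_term n f i :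
  (forall j, (j < n)%nat -> 0 <= f j) -> (i < n)%nat -> f i <= sumR n f.
Proof.
  induction n as [|n IH]; intros H Hi; simpl; [lia|].
  destruct (Nat.eq_dec i n) as [->|Hne].
  - pose proof (sumR_nonneg n f ltac:(intros; apply H; lia)); lra.
  - pose proof (IH ltac:(intros; apply H; lia) ltac:(lia)); pose proof (H n ltac:(lia)); lra.
Qed.

Lemma sumR_le_const n f c : (forall i, (i < n)%nat -> f i <= c) -> sumR n f <= INR n * c.
Proof.
  induction n as [|n IH]; intros H; [simpl; lra|].
  rewrite sumR_S, S_INR. pose proof (IH ltac:(intros; apply H; lia)); pose proof (H n ltac:(lia)); lra.
Qed.

Lemma dist_coord p x y i : (i < p)%nat -> Rabs (x i - y i) <= dist p x y.
Proof.
  intros Hi. unfold dist. rewrite <- sqrt_Rsqr_abs. apply sqrt_le_1_alt.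
  rewrite Rsqr_pow2. apply (sumR_le_term p (fun j => (x j - y j) ^ 2)); auto. intros; apply pow2_ge_0.
Qed.

(** * Continuity *)

Definition cont_real (p : nat) (A : (nat -> R) -> Prop) (h : (nat -> R) -> R) :=
  forall x, A x -> forall eps, 0 < eps -> exists d, 0 < d /\
    forall y, A y -> dist p x y < d -> Rabs (h x - h y) < eps.

Lemma continuity_pt_eps g t : continuity_pt g t ->
  forall eps, 0 < eps -> exists d, 0 < d /\
    forall t', Rabs (t' - t) < d -> Rabs (g t - g t') < eps.
Proof.
  intros H eps He. destruct (H eps He) as [d [Hd K]]. exists d; split; auto.
  intros t' Ht'. destruct (Req_dec t t') as [<-|Hne].
  - rewrite Rminus_diag, Rabs_R0; auto.
  - rewrite Rabs_minus_sym. apply (K t'). split; [split; [exact I|auto]|exact Ht'].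
Qed.

Section RealContinuity.
Variable p : nat.
Variable A : (nat -> R) -> Prop.

Lemma cont_real_const c : cont_real p A (fun _ => c).
Proof.
  intros x _ eps He. exists 1; split; [lra|]. intros.
  rewrite Rminus_diag, Rabs_R0; auto.
Qed.

Lemma cont_real_coord i : (i < p)%nat -> cont_real p A (fun x => x i).
Proof.
  intros Hi x _ eps He. exists eps; split; auto. intros y _ Hd.
  pose proof (dist_coord p x y i Hi); lra.
Qed.

Lemma cont_real_ext h h' : (forall x, A x -> h x = h' x) -> cont_real p A h' -> cont_real p A h.
Proof.
  intros E H x Ax eps He. destruct (H x Ax eps He) as [d [Hd K]].
  exists d; split; auto. intros y Ay Hy. rewrite !E by auto. auto.
Qed.

Lemma cont_real_plus h1 h2 :
  cont_real p A h1 -> cont_real p A h2 -> cont_real p A (fun x => h1 x + h2 x).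
Proof.
  intros H1 H2 x Ax eps He.
  destruct (H1 x Ax (eps / 2) ltac:(lra)) as [d1 [Hd1 K1]].
  destruct (H2 x Ax (eps / 2) ltac:(lra)) as [d2 [Hd2 K2]].
  exists (Rmin d1 d2); split; [apply Rmin_pos; auto|].
  intros y Ay Hy. pose proof (Rmin_l d1 d2); pose proof (Rmin_r d1 d2).
  specialize (K1 y Ay ltac:(lra)); specialize (K2 y Ay ltac:(lra)).
  pose proof (Rabs_triang (h1 x - h1 y) (h2 x - h2 y)).
  replace (h1 x + h2 x - (h1 y + h2 y)) with ((h1 x - h1 y) + (h2 x - h2 y)) by ring.
  lra.
Qed.

Lemma cont_real_comp h g : (forall x, A x -> continuity_pt g (h x)) ->
  cont_real p A h -> cont_real p A (fun x => g (h x)).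
Proof.
  intros Hg H x Ax eps He.
  destruct (continuity_pt_eps g (h x) (Hg x Ax) eps He) as [d1 [Hd1 K1]].
  destruct (H x Ax d1 Hd1) as [d [Hd K]]. exists d; split; auto.
  intros y Ay Hy. apply K1. rewrite Rabs_minus_sym. auto.
Qed.

Lemma cont_real_scal c h : cont_real p A h -> cont_real p A (fun x => c * h x).
Proof.
  apply (cont_real_comp h (fun s => c * s)). intros x _.
  exact (continuity_pt_scal id c _ (derivable_continuous_pt id _ (derivable_pt_id _))).
Qed.

Lemma cont_real_sq h : cont_real p A h -> cont_real p A (fun x => h x ^ 2).
Proof.
  apply (cont_real_comp h (fun s => s ^ 2)). intros x _.
  replace (fun s => s ^ 2) with (id * id)%F by (apply functional_extensionality; intro;
    unfold mult_fct, id; ring).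
  exact (continuity_pt_mult id id _ (derivable_continuous_pt id _ (derivable_pt_id _))
           (derivable_continuous_pt id _ (derivable_pt_id _))).
Qed.

Lemma cont_real_minus h1 h2 :
  cont_real p A h1 -> cont_real p A h2 -> cont_real p A (fun x => h1 x - h2 x).
Proof.
  intros H1 H2. apply (cont_real_ext _ (fun x => h1 x + (-1) * h2 x)); [intros; ring|].
  apply cont_real_plus, cont_real_scal; auto.
Qed.

(* Polarization: the product is a combination of squares, so only composition with
   the one-variable square is needed. *)
Lemma cont_real_mult h1 h2 :
  cont_real p A h1 -> cont_real p A h2 -> cont_real p A (fun x => h1 x * h2 x).
Proof.
  intros H1 H2.
  apply (cont_real_ext _ (fun x => / 4 * ((h1 x + h2 x) ^ 2 - (h1 x - h2 x) ^ 2)));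
    [intros; field|].
  apply cont_real_scal, cont_real_minus; apply cont_real_sq;
    [apply cont_real_plus | apply cont_real_minus]; auto.
Qed.

Lemma cont_real_sum m (h : nat -> (nat -> R) -> R) :
  (forall j, (j < m)%nat -> cont_real p A (h j)) ->
  cont_real p A (fun x => sumR m (fun j => h j x)).
Proof.
  induction m as [|m IH]; intros H; simpl; [apply cont_real_const|].
  apply cont_real_plus; [apply IH; intros; apply H; lia | apply H; lia].
Qed.

Lemma cont_real_inv_sqrt h : (forall x, A x -> 0 < h x) ->
  cont_real p A h -> cont_real p A (fun x => / sqrt (h x)).
Proof.
  intros Hpos. apply (cont_real_comp h (fun s => / sqrt s)). intros x Ax.
  specialize (Hpos x Ax). apply (continuity_pt_inv sqrt); [apply continuity_pt_sqrt; lra|].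
  pose proof (sqrt_lt_R0 _ Hpos); lra.
Qed.

End RealContinuity.

Lemma coords_close p q A f : (forall i, (i < q)%nat -> cont_real p A (fun x => f x i)) ->
  forall x, A x -> forall eps, 0 < eps -> exists d, 0 < d /\
    forall y, A y -> dist p x y < d -> forall i, (i < q)%nat -> Rabs (f x i - f y i) < eps.
Proof.
  induction q as [|q IH]; intros H x Ax eps He.
  - exists 1; split; [lra|]. intros; lia.
  - destruct (IH ltac:(intros; apply H; lia) x Ax eps He) as [d1 [Hd1 K1]].
    destruct (H q ltac:(lia) x Ax eps He) as [d2 [Hd2 K2]].
    exists (Rmin d1 d2); split; [apply Rmin_pos; auto|].
    intros y Ay Hy i Hi. pose proof (Rmin_l d1 d2); pose proof (Rmin_r d1 d2).
    destruct (Nat.eq_dec i q) as [->|Hne]; [apply K2 | apply K1]; auto; lra || lia.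
Qed.

Lemma cont_on_coords p q A f :
  (forall i, (i < q)%nat -> cont_real p A (fun x => f x i)) -> cont_on p q A f.
Proof.
  intros H x Ax eps He.
  set (e := eps / (INR q + 1)).
  assert (Hq : 0 < INR q + 1) by (pose proof (pos_INR q); lra).
  assert (He' : 0 < e) by (apply Rdiv_lt_0_compat; lra).
  destruct (coords_close p q A f H x Ax e He') as [d [Hd K]]. exists d; split; auto.
  intros y Ay Hy. unfold dist.
  assert (Hsum : sumR q (fun i => (f x i - f y i) ^ 2) <= INR q * (e * e)).
  { apply sumR_le_const. intros i Hi. specialize (K y Ay Hy i Hi).
    pose proof (Rabs_pos (f x i - f y i)). rewrite <- (pow2_abs (f x i - f y i)). nra. }
  assert (Heps : INR q * (e * e) < eps * eps).
  { assert (Ee : eps = e * (INR q + 1)) by (unfold e; field; lra).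
    rewrite Ee. pose proof (pos_INR q); nra. }
  rewrite <- (sqrt_square eps) by lra. apply sqrt_lt_1_alt.
  split; [apply sumR_nonneg; intros; apply pow2_ge_0 | lra].
Qed.

(** * Homeomorphisms *)

Lemma cont_on_mono p q A B f : (forall x, B x -> A x) -> cont_on p q A f -> cont_on p q B f.
Proof.
  intros HBA H x Bx eps He. destruct (H x (HBA x Bx) eps He) as [d [Hd K]].
  exists d; split; auto.
Qed.

Lemma cont_on_ext p q A f g : (forall x, A x -> f x = g x) -> cont_on p q A g -> cont_on p q A f.
Proof.
  intros E H x Ax eps He. destruct (H x Ax eps He) as [d [Hd K]].
  exists d; split; auto. intros y Ay Hy. rewrite !E by auto. auto.
Qed.

Lemma cont_on_comp p q r A B f g :
  (forall x, A x -> B (f x)) -> cont_on p q A f -> cont_on q r B g ->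
  cont_on p r A (fun x => g (f x)).
Proof.
  intros HAB Hf Hg x Ax eps He. destruct (Hg (f x) (HAB x Ax) eps He) as [d [Hd K]].
  destruct (Hf x Ax d Hd) as [d' [Hd' K']]. exists d'; split; auto.
Qed.

Lemma cont_on_local p q A f :
  (forall x, A x -> exists d0 (A0 : (nat -> R) -> Prop), 0 < d0 /\ A0 x /\
     (forall y, A y -> dist p x y < d0 -> A0 y) /\ cont_on p q A0 f) ->
  cont_on p q A f.
Proof.
  intros H x Ax eps He. destruct (H x Ax) as [d0 [A0 [Hd0 [A0x [Hnear Hf]]]]].
  destruct (Hf x A0x eps He) as [d [Hd K]].
  exists (Rmin d d0); split; [apply Rmin_pos; auto|].
  intros y Ay Hy. pose proof (Rmin_l d d0); pose proof (Rmin_r d d0).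
  apply K; [apply Hnear|]; auto; lra.
Qed.

Lemma homeo_trans p A q B r C :
  homeomorphic p A q B -> homeomorphic q B r C -> homeomorphic p A r C.
Proof.
  intros [f1 [g1 [a1 [b1 [c1 [d1 [e1 h1]]]]]]] [f2 [g2 [a2 [b2 [c2 [d2 [e2 h2]]]]]]].
  exists (fun x => f2 (f1 x)), (fun z => g1 (g2 z)).
  repeat split; intros; auto.
  - rewrite c2; auto.
  - rewrite d1; auto.
  - apply (cont_on_comp p q r A B); auto.
  - apply (cont_on_comp r q p C B); auto.
Qed.

Lemma homeo_set_ext p q A A' B :
  (forall x, A x <-> A' x) -> homeomorphic p A q B -> homeomorphic p A' q B.
Proof.
  intros E [f [g [a [b [c [d [e h]]]]]]]. exists f, g.
  repeat split; intros; auto; try apply a; try apply c; try apply E; auto.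
  apply (cont_on_mono p q A); auto. intros; apply E; auto.
Qed.

Definition tag (c : R) (z : nat -> R) : nat -> R :=
  fun i => match i with O => c | S i' => z i' end.

Lemma shift1_tag c z : shift1 (tag c z) = z.
Proof. reflexivity. Qed.

Lemma dist_tag q c z z' : dist (S q) (tag c z) (tag c z') = dist q z z'.
Proof. unfold dist. rewrite sumR_shift. simpl. f_equal. ring. Qed.

Lemma dist_shift1 q y y' : dist q (shift1 y) (shift1 y') <= dist (S q) y y'.
Proof.
  unfold dist. apply sqrt_le_1_alt. rewrite sumR_shift. unfold shift1.
  pose proof (pow2_ge_0 (y 0%nat - y' 0%nat)); lra.
Qed.

Lemma cont_on_tag p q A f c : cont_on p q A f -> cont_on p (S q) A (fun x => tag c (f x)).
Proof.
  intros H x Ax eps He. destruct (H x Ax eps He) as [d [Hd K]].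
  exists d; split; auto. intros y Ay Hy. rewrite dist_tag. auto.
Qed.

Lemma cont_on_shift1 q p A B g : (forall y, A y -> B (shift1 y)) ->
  cont_on q p B g -> cont_on (S q) p A (fun y => g (shift1 y)).
Proof.
  intros HAB H y Ay eps He. destruct (H _ (HAB y Ay) eps He) as [d [Hd K]].
  exists d; split; auto. intros y' Ay' Hy'. pose proof (dist_shift1 q y y').
  apply K; auto; lra.
Qed.

Section DisjointUnion.
Variables p q : nat.
Variables A1 A2 B1 B2 : (nat -> R) -> Prop.
Variable h : (nat -> R) -> R.
Hypothesis h_cont : cont_real p (fun x => A1 x \/ A2 x) h.
Hypothesis h_A1 : forall x, A1 x -> h x = -1.
Hypothesis h_A2 : forall x, A2 x -> h x = 1.

Let A x := A1 x \/ A2 x.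
Let B y := (y 0%nat = 0 /\ B1 (shift1 y)) \/ (y 0%nat = 1 /\ B2 (shift1 y)).

Lemma pieces_separated x : A x -> exists d, 0 < d /\
  forall y, A y -> dist p x y < d -> (A1 x -> A1 y) /\ (A2 x -> A2 y).
Proof.
  intros Ax. destruct (h_cont x Ax 1 ltac:(lra)) as [d [Hd K]]. exists d; split; auto.
  intros y Ay Hy. specialize (K y Ay Hy).
  destruct Ay as [Ay|Ay]; split; intros Ax'; auto; exfalso;
    [rewrite (h_A2 x Ax'), (h_A1 y Ay) in K | rewrite (h_A1 x Ax'), (h_A2 y Ay) in K];
    [rewrite Rabs_right in K | rewrite Rabs_left in K]; lra.
Qed.

Lemma tags_separated y y' : B y -> B y' -> dist (S q) y y' < 1 -> y' 0%nat = y 0%nat.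
Proof.
  intros Hy Hy' Hd. pose proof (dist_coord (S q) y y' 0 ltac:(lia)) as H0.
  destruct Hy as [[E _]|[E _]]; destruct Hy' as [[E' _]|[E' _]]; rewrite E, E' in *; auto;
    [rewrite Rabs_left in H0 | rewrite Rabs_right in H0]; lra.
Qed.

Definition union_map (f1 f2 : (nat -> R) -> nat -> R) (x : nat -> R) : nat -> R :=
  if Rlt_dec (h x) 0 then tag 0 (f1 x) else tag 1 (f2 x).

Definition union_inv (g1 g2 : (nat -> R) -> nat -> R) (y : nat -> R) : nat -> R :=
  if Req_EM_T (y 0%nat) 0 then g1 (shift1 y) else g2 (shift1 y).

Lemma union_map_A1 f1 f2 x : A1 x -> union_map f1 f2 x = tag 0 (f1 x).
Proof. intros Ax. unfold union_map. rewrite h_A1 by auto. destruct (Rlt_dec (-1) 0); [auto|lra]. Qed.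

Lemma union_map_A2 f1 f2 x : A2 x -> union_map f1 f2 x = tag 1 (f2 x).
Proof. intros Ax. unfold union_map. rewrite h_A2 by auto. destruct (Rlt_dec 1 0); [lra|auto]. Qed.

Lemma union_inv_0 g1 g2 y : y 0%nat = 0 -> union_inv g1 g2 y = g1 (shift1 y).
Proof. intros E. unfold union_inv. destruct Req_EM_T; [auto|lra]. Qed.

Lemma union_inv_1 g1 g2 y : y 0%nat = 1 -> union_inv g1 g2 y = g2 (shift1 y).
Proof. intros E. unfold union_inv. destruct Req_EM_T; [lra|auto]. Qed.

Lemma cont_on_union_map f1 f2 : cont_on p q A1 f1 -> cont_on p q A2 f2 ->
  cont_on p (S q) A (union_map f1 f2).
Proof.
  intros Hf1 Hf2. apply cont_on_local. intros x Ax.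
  destruct (pieces_separated x Ax) as [d [Hd Hsep]].
  destruct Ax as [Ax|Ax]; [exists d, A1 | exists d, A2]; repeat split; auto;
    try (intros y Ay Hy; apply (Hsep y Ay Hy); auto).
  - apply (cont_on_ext _ _ _ _ (fun x => tag 0 (f1 x))); [apply union_map_A1|].
    apply cont_on_tag; auto.
  - apply (cont_on_ext _ _ _ _ (fun x => tag 1 (f2 x))); [apply union_map_A2|].
    apply cont_on_tag; auto.
Qed.

Lemma cont_on_union_inv g1 g2 : cont_on q p B1 g1 -> cont_on q p B2 g2 ->
  cont_on (S q) p B (union_inv g1 g2).
Proof.
  intros Hg1 Hg2. apply cont_on_local. intros y By. pose proof (tags_separated y) as Hsep.
  destruct By as [[E By]|[E By]].
  - exists 1, (fun y => y 0%nat = 0 /\ B1 (shift1 y)).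
    split; [lra|]. split; [split; auto|]. split.
    + intros y' By' Hy'. specialize (Hsep y' ltac:(left; auto) By' Hy').
      destruct By' as [[E' B']|[E' _]]; split; auto; lra.
    + apply (cont_on_ext _ _ _ _ (fun y => g1 (shift1 y)));
        [intros y' [E' _]; apply union_inv_0; auto|].
      apply (cont_on_shift1 q p _ B1); [intros y' []|]; auto.
  - exists 1, (fun y => y 0%nat = 1 /\ B2 (shift1 y)).
    split; [lra|]. split; [split; auto|]. split.
    + intros y' By' Hy'. specialize (Hsep y' ltac:(right; auto) By' Hy').
      destruct By' as [[E' _]|[E' B']]; split; auto; lra.
    + apply (cont_on_ext _ _ _ _ (fun y => g2 (shift1 y)));
        [intros y' [E' _]; apply union_inv_1; auto|].
      apply (cont_on_shift1 q p _ B2); [intros y' []|]; auto.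
Qed.

Lemma homeo_disj_union : homeomorphic p A1 q B1 -> homeomorphic p A2 q B2 ->
  homeomorphic p A (S q) B.
Proof.
  intros [f1 [g1 [a1 [b1 [c1 [d1 [e1 k1]]]]]]] [f2 [g2 [a2 [b2 [c2 [d2 [e2 k2]]]]]]].
  exists (union_map f1 f2), (union_inv g1 g2). split; [|split; [|split; [|split; [|split]]]].
  - intros x [Ax|Ax]; [left; rewrite union_map_A1 by auto | right; rewrite union_map_A2 by auto];
      rewrite shift1_tag; split; auto.
  - intros y [[E By]|[E By]]; [rewrite union_inv_0 | rewrite union_inv_1]; unfold A; auto.
  - intros x [Ax|Ax]; [rewrite union_map_A1, union_inv_0 | rewrite union_map_A2, union_inv_1];
      rewrite ?shift1_tag; auto.
  - intros y [[E By]|[E By]];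
      [rewrite union_inv_0, union_map_A1, d1 by auto | rewrite union_inv_1, union_map_A2, d2 by auto];
      apply functional_extensionality; intros [|i]; simpl; auto.
  - apply cont_on_union_map; auto.
  - apply cont_on_union_inv; auto.
Qed.

End DisjointUnion.

(** * Quadrics *)

Definition tail_sq (a b : nat) (z : nat -> R) : R := sumR b (fun j => z (a + j)%nat ^ 2).

Definition Quadric (a b : nat) (z : nat -> R) : Prop :=
  in_R (a + b) z /\ sumR a (fun i => z i ^ 2) - tail_sq a b z = 1.

Lemma tail_sq_nonneg a b z : 0 <= tail_sq a b z.
Proof. apply sumR_nonneg; intros; apply pow2_ge_0. Qed.

Lemma tail_sq_scale a b z c : tail_sq a b (fun i => z i * c) = c ^ 2 * tail_sq a b z.
Proof. apply sumR_sq_scal. Qed.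

Lemma inv_sqrt_sq t : 0 < t -> (/ sqrt t) ^ 2 = / t.
Proof.
  intros Ht. rewrite pow_inv, <- Rsqr_pow2, Rsqr_sqrt; lra.
Qed.

Section QuadricBall.
Variables a b : nat.

(* [z''] denotes the last [b] coordinates: rescaling by [1 / sqrt (1 + |z''|^2)] maps
   [|z'|^2 - |z''|^2 = 1] onto [|w'|^2 = 1, |w''| < 1]. *)
Definition to_ball (z : nat -> R) : nat -> R := fun i => z i * / sqrt (1 + tail_sq a b z).
Definition from_ball (w : nat -> R) : nat -> R := fun i => w i * / sqrt (1 - tail_sq a b w).

Lemma tail_sq_to_ball z : tail_sq a b (to_ball z) = tail_sq a b z / (1 + tail_sq a b z).
Proof.
  pose proof (tail_sq_nonneg a b z). unfold to_ball. rewrite tail_sq_scale, inv_sqrt_sq by lra.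
  field; lra.
Qed.

Lemma tail_sq_from_ball w : tail_sq a b w < 1 ->
  tail_sq a b (from_ball w) = tail_sq a b w / (1 - tail_sq a b w).
Proof.
  intros Hw. unfold from_ball. rewrite tail_sq_scale, inv_sqrt_sq by lra. field; lra.
Qed.

Lemma to_ball_SphDisc z : Quadric a b z -> SphDisc a b (to_ball z).
Proof.
  intros [Hz Hq]. pose proof (tail_sq_nonneg a b z). split; [|split].
  - intros i Hi. unfold to_ball. rewrite Hz by auto. ring.
  - unfold to_ball. rewrite sumR_sq_scal, inv_sqrt_sq by lra.
    replace (sumR a (fun i => z i ^ 2)) with (1 + tail_sq a b z) by lra. field; lra.
  - change (tail_sq a b (to_ball z) < 1). rewrite tail_sq_to_ball.
    apply Rmult_lt_reg_r with (1 + tail_sq a b z); [lra|]. unfold Rdiv.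
    rewrite Rmult_assoc, Rinv_l by lra. lra.
Qed.

Lemma from_ball_Quadric w : SphDisc a b w -> Quadric a b (from_ball w).
Proof.
  intros [Hw [Hs Ht]]. fold (tail_sq a b w) in Ht. pose proof (tail_sq_nonneg a b w).
  split.
  - intros i Hi. unfold from_ball. rewrite Hw by auto. ring.
  - rewrite tail_sq_from_ball by auto. unfold from_ball.
    rewrite sumR_sq_scal, inv_sqrt_sq, Hs by lra. field; lra.
Qed.

Lemma from_to_ball z : Quadric a b z -> from_ball (to_ball z) = z.
Proof.
  intros _. pose proof (tail_sq_nonneg a b z) as Hz.
  set (s := sqrt (1 + tail_sq a b z)).
  assert (Hs : 0 < s) by (apply sqrt_lt_R0; lra).
  assert (Hss : s * s = 1 + tail_sq a b z) by (apply sqrt_sqrt; lra).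
  assert (E : 1 - tail_sq a b (to_ball z) = (/ s) ^ 2).
  { rewrite tail_sq_to_ball. replace (tail_sq a b z) with (s * s - 1) by lra. field. lra. }
  apply functional_extensionality; intros i. unfold from_ball.
  rewrite E, sqrt_pow2 by (left; apply Rinv_0_lt_compat; lra).
  unfold to_ball. fold s. field; lra.
Qed.

Lemma to_from_ball w : SphDisc a b w -> to_ball (from_ball w) = w.
Proof.
  intros [_ [_ Ht]]. fold (tail_sq a b w) in Ht. pose proof (tail_sq_nonneg a b w).
  set (r := sqrt (1 - tail_sq a b w)).
  assert (Hr : 0 < r) by (apply sqrt_lt_R0; lra).
  assert (Hrr : r * r = 1 - tail_sq a b w) by (apply sqrt_sqrt; lra).
  assert (E : 1 + tail_sq a b (from_ball w) = (/ r) ^ 2).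
  { rewrite tail_sq_from_ball by auto. replace (tail_sq a b w) with (1 - r * r) by lra.
    field. lra. }
  apply functional_extensionality; intros i. unfold to_ball.
  rewrite E, sqrt_pow2 by (left; apply Rinv_0_lt_compat; lra).
  unfold from_ball. fold r. field; lra.
Qed.

Lemma cont_real_tail_sq p A : (a + b <= p)%nat -> cont_real p A (tail_sq a b).
Proof.
  intros Hp. apply (cont_real_sum p A b (fun j z => z (a + j)%nat ^ 2)).
  intros; apply cont_real_sq, cont_real_coord; lia.
Qed.

Lemma quadric_homeo_SphDisc : homeomorphic (a + b) (Quadric a b) (a + b) (SphDisc a b).
Proof.
  exists to_ball, from_ball. split; [|split; [|split; [|split; [|split]]]].
  - exact to_ball_SphDisc.
  - exact from_ball_Quadric.
  - exact from_to_ball.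
  - exact to_from_ball.
  - apply cont_on_coords; intros i Hi. apply cont_real_mult; [apply cont_real_coord; auto|].
    apply cont_real_inv_sqrt.
    + intros z _. pose proof (tail_sq_nonneg a b z); lra.
    + apply cont_real_plus; [apply cont_real_const | apply cont_real_tail_sq; lia].
  - apply cont_on_coords; intros i Hi. apply cont_real_mult; [apply cont_real_coord; auto|].
    apply cont_real_inv_sqrt.
    + intros w [_ [_ Ht]]. fold (tail_sq a b w) in Ht. lra.
    + apply cont_real_minus; [apply cont_real_const | apply cont_real_tail_sq; lia].
Qed.

End QuadricBall.

(** * Sorting the coordinates of a diagonal form by sign *)

Fixpoint count_pos (e : nat -> R) (m : nat) : nat :=
  match m with
  | O => O
  | S m' => if Rlt_dec 0 (e m') then S (count_pos e m') else count_pos e m'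
  end.

Lemma count_pos_le e m : (count_pos e m <= m)%nat.
Proof. induction m; simpl; auto. destruct (Rlt_dec 0 (e m)); lia. Qed.

Lemma count_pos_ext e e' m : (forall j, (j < m)%nat -> e j = e' j) -> count_pos e m = count_pos e' m.
Proof.
  induction m as [|m IH]; intros H; simpl; auto.
  rewrite H, IH by first [lia | intros; apply H; lia]. reflexivity.
Qed.

Lemma count_pos_opp e m : (forall j, (j < m)%nat -> e j = 1 \/ e j = -1) ->
  (count_pos (fun i => (-1 * e i)%R) m + count_pos e m = m)%nat.
Proof.
  induction m as [|m IH]; intros H; simpl; auto.
  specialize (IH ltac:(intros; apply H; lia)).
  destruct (H m ltac:(lia)) as [E|E]; rewrite E;
    destruct (Rlt_dec 0 (-1 * 1)); destruct (Rlt_dec 0 1);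
    destruct (Rlt_dec 0 (-1 * -1)); destruct (Rlt_dec 0 (-1)); lra || lia.
Qed.

Definition insert_at (p : nat) (v : R) (z : nat -> R) : nat -> R :=
  fun i => if Nat.ltb i p then z i else if Nat.eqb i p then v else z (i - 1)%nat.
Definition set_at (p : nat) (v : R) (z : nat -> R) : nat -> R :=
  fun i => if Nat.eqb i p then v else z i.
Definition remove_at (p : nat) (z : nat -> R) : nat -> R :=
  fun i => if Nat.ltb i p then z i else z (S i).
Definition truncate (m : nat) (z : nat -> R) : nat -> R :=
  fun i => if Nat.ltb i m then z i else 0.

Ltac nat_cases := repeat match goal with
  | |- context [Nat.ltb ?a ?b] => destruct (Nat.ltb_spec a b)
  | |- context [Nat.eqb ?a ?b] => destruct (Nat.eqb_spec a b)
  end.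

Lemma truncate_id m z : in_R m z -> truncate m z = z.
Proof.
  intros H; apply functional_extensionality; intros i; unfold truncate; nat_cases; auto.
  rewrite H; auto; lia.
Qed.

(* [sort_signs e m psi] lists the coordinates [psi j] with [0 < e j] first and the
   others after them, both in increasing order of [j]; [unsort_signs] undoes it. *)
Fixpoint sort_signs (e : nat -> R) (m : nat) (psi : nat -> R) : nat -> R :=
  match m with
  | O => fun _ => 0
  | S m' => if Rlt_dec 0 (e m') then insert_at (count_pos e m') (psi m') (sort_signs e m' psi)
            else set_at m' (psi m') (sort_signs e m' psi)
  end.

Fixpoint unsort_signs (e : nat -> R) (m : nat) (z : nat -> R) : nat -> R :=
  match m with
  | O => fun _ => 0
  | S m' => if Rlt_dec 0 (e m')
            then set_at m' (z (count_pos e m')) (unsort_signs e m' (remove_at (count_pos e m') z))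
            else set_at m' (z m') (unsort_signs e m' z)
  end.

Section SortSigns.
Variable e : nat -> R.

Lemma sort_signs_support m psi : in_R m (sort_signs e m psi).
Proof.
  induction m as [|m IH]; intros i Hi; simpl; auto. pose proof (count_pos_le e m).
  destruct (Rlt_dec 0 (e m)); unfold set_at, insert_at; nat_cases; try lia; apply IH; lia.
Qed.

Lemma unsort_signs_support m z : in_R m (unsort_signs e m z).
Proof.
  revert z; induction m as [|m IH]; intros z i Hi; simpl; auto.
  destruct (Rlt_dec 0 (e m)); unfold set_at; nat_cases; try lia; apply IH; lia.
Qed.

Lemma sort_signs_local m psi psi' : (forall i, (i < m)%nat -> psi i = psi' i) ->
  sort_signs e m psi = sort_signs e m psi'.
Proof.
  induction m as [|m IH]; intros H; simpl; auto.
  rewrite H, IH by first [lia | intros; apply H; lia]. reflexivity.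
Qed.

Lemma unsort_signs_local m z z' : (forall i, (i < m)%nat -> z i = z' i) ->
  unsort_signs e m z = unsort_signs e m z'.
Proof.
  revert z z'; induction m as [|m IH]; intros z z' H; simpl; auto.
  pose proof (count_pos_le e m). destruct (Rlt_dec 0 (e m)); rewrite H by lia; f_equal;
    apply IH; intros i Hi; unfold remove_at; nat_cases; apply H; lia.
Qed.

Lemma unsort_sort_signs m psi : unsort_signs e m (sort_signs e m psi) = truncate m psi.
Proof.
  induction m as [|m IH]; simpl;
    [apply functional_extensionality; intros; unfold truncate; nat_cases; lia || auto|].
  pose proof (count_pos_le e m). destruct (Rlt_dec 0 (e m)).
  - assert (E : remove_at (count_pos e m) (insert_at (count_pos e m) (psi m) (sort_signs e m psi))
                = sort_signs e m psi).
    { apply functional_extensionality; intros i; unfold remove_at, insert_at; nat_cases;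
        try lia; auto. f_equal; lia. }
    rewrite E, IH. unfold insert_at; nat_cases; try lia.
    apply functional_extensionality; intros i; unfold set_at, truncate; nat_cases; subst; auto; lia.
  - rewrite (unsort_signs_local m _ (sort_signs e m psi))
      by (intros; unfold set_at; nat_cases; lia || auto).
    rewrite IH. unfold set_at at 1; nat_cases; try lia.
    apply functional_extensionality; intros i; unfold set_at, truncate; nat_cases; subst; auto; lia.
Qed.

Lemma sort_unsort_signs m z : sort_signs e m (unsort_signs e m z) = truncate m z.
Proof.
  revert z; induction m as [|m IH]; intros z; simpl;
    [apply functional_extensionality; intros; unfold truncate; nat_cases; lia || auto|].
  pose proof (count_pos_le e m). destruct (Rlt_dec 0 (e m)); unfold set_at at 1; nat_cases; try lia.
  - rewrite (sort_signs_local m _ (unsort_signs e m (remove_at (count_pos e m) z)))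
      by (intros; unfold set_at; nat_cases; lia || auto).
    rewrite IH. apply functional_extensionality; intros i;
      unfold insert_at, truncate, remove_at; nat_cases; subst; auto; try lia. f_equal; lia.
  - rewrite (sort_signs_local m _ (unsort_signs e m z))
      by (intros; unfold set_at; nat_cases; lia || auto).
    rewrite IH. apply functional_extensionality; intros i;
      unfold set_at, truncate; nat_cases; subst; auto; lia.
Qed.

Lemma quadric_sort_signs m psi : (forall j, (j < m)%nat -> e j = 1 \/ e j = -1) ->
  sumR (count_pos e m) (fun i => sort_signs e m psi i ^ 2)
    - tail_sq (count_pos e m) (m - count_pos e m) (sort_signs e m psi)
  = sumR m (fun j => e j * psi j ^ 2).
Proof.
  unfold tail_sq. induction m as [|m IH]; intros He; [simpl; lra|].
  pose proof (count_pos_le e m). specialize (IH ltac:(intros; apply He; lia)).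
  simpl count_pos; simpl sort_signs. rewrite (sumR_S m). destruct (Rlt_dec 0 (e m)).
  - assert (Em : e m = 1) by (destruct (He m ltac:(lia)); lra).
    replace (S m - S (count_pos e m))%nat with (m - count_pos e m)%nat by lia.
    rewrite sumR_S, (sumR_ext (count_pos e m) _ (fun i => sort_signs e m psi i ^ 2))
      by (intros; unfold insert_at; nat_cases; lia || auto).
    rewrite (sumR_ext (m - count_pos e m) _ (fun i => sort_signs e m psi (count_pos e m + i)%nat ^ 2))
      by (intros; unfold insert_at; nat_cases; try lia; do 2 f_equal; lia).
    unfold insert_at; nat_cases; try lia. rewrite Em. lra.
  - assert (Em : e m = -1) by (destruct (He m ltac:(lia)); lra).
    replace (S m - count_pos e m)%nat with (S (m - count_pos e m)) by lia.
    rewrite sumR_S, (sumR_ext (count_pos e m) _ (fun i => sort_signs e m psi i ^ 2))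
      by (intros; unfold set_at; nat_cases; lia || auto).
    rewrite (sumR_ext (m - count_pos e m) _ (fun i => sort_signs e m psi (count_pos e m + i)%nat ^ 2))
      by (intros; unfold set_at; nat_cases; lia || auto).
    unfold set_at; nat_cases; try lia. rewrite Em. lra.
Qed.

Lemma sort_signs_coord m i : (exists j, (j < m)%nat /\ forall psi, sort_signs e m psi i = psi j)
  \/ (forall psi, sort_signs e m psi i = 0).
Proof.
  revert i; induction m as [|m IH]; intros i; simpl; [right; auto|]. pose proof (count_pos_le e m).
  destruct (Rlt_dec 0 (e m)); unfold insert_at, set_at; nat_cases;
    try (left; exists m; split; auto; fail);
    [destruct (IH i) | destruct (IH (i - 1)%nat) | destruct (IH i)]; 
    firstorder (try lia).
Qed.

Lemma unsort_signs_coord m i : (exists j, (j < m)%nat /\ forall z, unsort_signs e m z i = z j)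
  \/ (forall z, unsort_signs e m z i = 0).
Proof.
  revert i; induction m as [|m IH]; intros i; simpl; [right; auto|]. pose proof (count_pos_le e m).
  destruct (Rlt_dec 0 (e m)); unfold set_at; nat_cases.
  - left; exists (count_pos e m); split; auto; lia.
  - destruct (IH i) as [[j [Hj K]]|K]; [left|right; auto].
    unfold remove_at in K. destruct (Nat.ltb_spec j (count_pos e m));
      [exists j | exists (S j)]; split; try lia; intros z; rewrite K; unfold remove_at;
      nat_cases; auto; lia.
  - left; exists m; split; auto.
  - destruct (IH i) as [[j [Hj K]]|K]; [left; exists j; split; auto; lia | right; auto].
Qed.

End SortSigns.

Definition DiagQuadric (m : nat) (e : nat -> R) (psi : nat -> R) : Prop :=
  in_R m psi /\ sumR m (fun j => e j * psi j ^ 2) = 1.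

Lemma cont_on_coord_or_zero p q A (f : (nat -> R) -> nat -> R) :
  (forall i, (i < q)%nat ->
     (exists j, (j < p)%nat /\ forall x, f x i = x j) \/ (forall x, f x i = 0)) ->
  cont_on p q A f.
Proof.
  intros H. apply cont_on_coords; intros i Hi. destruct (H i Hi) as [[j [Hj K]]|K].
  - apply (cont_real_ext p A _ (fun x => x j)); [intros; auto | apply cont_real_coord; auto].
  - apply (cont_real_ext p A _ (fun _ => 0)); [intros; auto | apply cont_real_const].
Qed.

Lemma diag_quadric_homeo_quadric m e : (forall j, (j < m)%nat -> e j = 1 \/ e j = -1) ->
  homeomorphic m (DiagQuadric m e) m (Quadric (count_pos e m) (m - count_pos e m)).
Proof.
  intros He. pose proof (count_pos_le e m).
  assert (Hm : (count_pos e m + (m - count_pos e m))%nat = m) by lia.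
  exists (sort_signs e m), (unsort_signs e m).
  split; [|split; [|split; [|split; [|split]]]].
  - intros psi [_ Hq]. split; [rewrite Hm; apply sort_signs_support|].
    rewrite quadric_sort_signs; auto.
  - intros z [Hz Hq]. rewrite Hm in Hz. split; [apply unsort_signs_support|].
    rewrite <- quadric_sort_signs, sort_unsort_signs, truncate_id; auto.
  - intros psi [Hpsi _]. rewrite unsort_sort_signs. apply truncate_id; auto.
  - intros z [Hz _]. rewrite Hm in Hz. rewrite sort_unsort_signs. apply truncate_id; auto.
  - apply cont_on_coord_or_zero; intros i _. apply sort_signs_coord.
  - apply cont_on_coord_or_zero; intros i _. apply unsort_signs_coord.
Qed.

(** * Polygons with first vertex at the origin *)

Definition cross_dir (a b : R) : R := cos a * sin b - sin a * cos b.

Lemma cross_dir_sin a b : cross_dir a b = sin (b - a).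
Proof. unfold cross_dir. rewrite sin_minus. ring. Qed.

(* Signed distance of vertex [j] from the line [e_0], which passes through [v_0 = 0]. *)
Definition height (th : nat -> R) (x : nat -> R) (j : nat) : R :=
  cos (th 0%nat) * vy x j - sin (th 0%nat) * vx x j.

Definition area_coef (th : nat -> R) (j : nat) : R :=
  - cross_dir (th j) (th (S j))
    / (2 * (cross_dir (th 0%nat) (th j) * cross_dir (th 0%nat) (th (S j)))).

Definition cross_vtx (x : nat -> R) (i j : nat) : R := vx x i * vy x j - vx x j * vy x i.

Lemma nxt_succ n i : (S i < n)%nat -> nxt n i = S i.
Proof. intros H; unfold nxt; apply Nat.mod_small; auto. Qed.

Lemma nxt_last n : (0 < n)%nat -> nxt n (n - 1) = 0%nat.
Proof. intros H; unfold nxt. replace (S (n - 1)) with n by lia. apply Nat.Div0.mod_same. Qed.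

Lemma area_interior n x : (3 <= n)%nat -> vx x 0 = 0 -> vy x 0 = 0 ->
  area n x = / 2 * sumR (n - 2) (fun i => cross_vtx x (S i) (S (S i))).
Proof.
  intros Hn H0 H1. unfold area. f_equal.
  replace n with (S (S (n - 2))) at 1 by lia.
  assert (Hlast : nxt n (S (n - 2)) = 0%nat)
    by (replace (S (n - 2)) with (n - 1)%nat by lia; apply nxt_last; lia).
  rewrite sumR_S, sumR_shift, Hlast, H0, H1.
  rewrite (sumR_ext (n - 2) _ (fun i => cross_vtx x (S i) (S (S i)))); [ring|].
  intros i Hi. rewrite nxt_succ by lia. reflexivity.
Qed.

Lemma parallel_decomp c s dx dy : c ^ 2 + s ^ 2 = 1 -> c * dy - s * dx = 0 ->
  dx = (c * dx + s * dy) * c /\ dy = (c * dx + s * dy) * s.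
Proof.
  intros H1 H2. assert (H : c * dy = s * dx) by lra. split.
  - replace ((c * dx + s * dy) * c) with (c ^ 2 * dx + s * (c * dy)) by ring.
    rewrite H. replace (c ^ 2 * dx + s * (s * dx)) with ((c ^ 2 + s ^ 2) * dx) by ring.
    rewrite H1; ring.
  - replace ((c * dx + s * dy) * s) with (c * (s * dx) + s ^ 2 * dy) by ring.
    rewrite <- H. replace (c * (c * dy) + s ^ 2 * dy) with ((c ^ 2 + s ^ 2) * dy) by ring.
    rewrite H1; ring.
Qed.

Lemma is_Q_edge n th x i : is_Q n th x -> (S i < n)%nat ->
  exists l, vx x (S i) = vx x i + l * cos (th (S i)) /\ vy x (S i) = vy x i + l * sin (th (S i)).
Proof.
  intros [c H] Hi. destruct (H i ltac:(lia)) as [_ A1]. destruct (H (S i) Hi) as [A2 _].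
  rewrite nxt_succ in A1 by auto. unfold on_line in *.
  destruct (parallel_decomp (cos (th (S i))) (sin (th (S i)))
              (vx x (S i) - vx x i) (vy x (S i) - vy x i)) as [E1 E2].
  - rewrite <- (sin2_cos2 (th (S i))). unfold Rsqr. ring.
  - lra.
  - eexists; split; [rewrite <- E1 | rewrite <- E2]; ring.
Qed.

Lemma is_Q_last_height n th x : (0 < n)%nat -> is_Q n th x -> vx x 0 = 0 -> vy x 0 = 0 ->
  height th x (n - 1) = 0.
Proof.
  intros Hn [c H] H0 H1. destruct (H (n - 1)%nat ltac:(lia)) as [_ A1].
  destruct (H 0%nat Hn) as [A2 _]. rewrite nxt_last in A1 by auto.
  unfold on_line, height in *. rewrite H0, H1 in A2. lra.
Qed.

(* Moving from [(X, Y)] along direction [(cn, sn)], the cross product of consecutive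
   vertices splits into a multiple of the squared height and a telescoping difference. *)
Lemma cross_step_identity (c0 s0 cm sm cn sn X Y l : R) :
  c0 * sm - s0 * cm <> 0 -> c0 * sn - s0 * cn <> 0 ->
  X * (Y + l * sn) - (X + l * cn) * Y
  = - (c0 * Y - s0 * X) ^ 2 * (cm * sn - sm * cn) / ((c0 * sm - s0 * cm) * (c0 * sn - s0 * cn))
    + (c0 * (Y + l * sn) - s0 * (X + l * cn)) / (c0 * sn - s0 * cn)
      * ((X + l * cn) * sn - cn * (Y + l * sn))
    - (c0 * Y - s0 * X) / (c0 * sm - s0 * cm) * (X * sm - cm * Y).
Proof. intros H1 H2. field. split; auto. Qed.

Section Polygon.
Variable n : nat.
Variable th : nat -> R.
Hypothesis n_ge3 : (3 <= n)%nat.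
Hypothesis base_nz : forall j, (1 <= j)%nat -> (j < n)%nat -> cross_dir (th 0%nat) (th j) <> 0.
Hypothesis succ_nz : forall j, (1 <= j)%nat -> (S j < n)%nat -> cross_dir (th j) (th (S j)) <> 0.

Let base j := cross_dir (th 0%nat) (th j).

Lemma area_partial x : Stilde n th x -> forall m, (S (S m) <= n)%nat ->
  sumR m (fun i => cross_vtx x (S i) (S (S i)))
  = sumR m (fun i => 2 * area_coef th (S i) * height th x (S i) ^ 2)
    + height th x (S m) / base (S m)
      * (vx x (S m) * sin (th (S m)) - cos (th (S m)) * vy x (S m)).
Proof.
  intros [_ [HQ [H0 H1]]] m. induction m as [|m IH]; intros Hm.
  - destruct (is_Q_edge n th x 0 HQ ltac:(lia)) as [l [E1 E2]].
    rewrite H0 in E1; rewrite H1 in E2. simpl. rewrite E1, E2. ring.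
  - rewrite !sumR_S, IH by lia.
    destruct (is_Q_edge n th x (S m) HQ ltac:(lia)) as [l [E1 E2]].
    unfold cross_vtx, height, area_coef, base, cross_dir in *. rewrite E1, E2.
    rewrite (cross_step_identity _ _ _ _ _ _ _ _ l
               (base_nz (S m) ltac:(lia) ltac:(lia)) (base_nz (S (S m)) ltac:(lia) ltac:(lia))).
    field. split; [apply (base_nz (S (S m))) | apply (base_nz (S m))]; lia.
Qed.

Lemma area_diag x : Stilde n th x ->
  area n x = sumR (n - 2) (fun i => area_coef th (S i) * height th x (S i) ^ 2).
Proof.
  intros HS. pose proof HS as [_ [HQ [H0 H1]]]. rewrite area_interior by auto.
  rewrite (area_partial x HS (n - 2)) by lia. replace (S (n - 2)) with (n - 1)%nat by lia.
  rewrite (is_Q_last_height n th x) by (auto; lia).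
  rewrite (sumR_ext _ _ (fun i => 2 * (area_coef th (S i) * height th x (S i) ^ 2)))
    by (intros; ring).
  rewrite sumR_scal. field. apply base_nz; lia.
Qed.

Lemma area_coef_nz j : (1 <= j)%nat -> (S j < n)%nat -> area_coef th j <> 0.
Proof.
  intros H1 H2. pose proof (succ_nz j H1 H2). pose proof (base_nz j H1 ltac:(lia)).
  pose proof (base_nz (S j) ltac:(lia) H2). unfold area_coef, Rdiv.
  apply Rmult_integral_contrapositive; split; [lra|].
  apply Rinv_neq_0_compat. apply Rmult_integral_contrapositive; split; [lra|].
  apply Rmult_integral_contrapositive; split; auto.
Qed.

Definition coef_root (j : nat) : R := sqrt (Rabs (area_coef th j)).
Definition area_sign (i : nat) : R := if Rlt_dec 0 (area_coef th (S i)) then 1 else -1.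

Lemma coef_root_pos j : (1 <= j)%nat -> (S j < n)%nat -> 0 < coef_root j.
Proof. intros. apply sqrt_lt_R0, Rabs_pos_lt, area_coef_nz; auto. Qed.

Lemma area_coef_sign i : (i < n - 2)%nat -> area_coef th (S i) = area_sign i * coef_root (S i) ^ 2.
Proof.
  intros Hi. unfold area_sign, coef_root. rewrite <- Rsqr_pow2, Rsqr_sqrt by apply Rabs_pos.
  pose proof (area_coef_nz (S i) ltac:(lia) ltac:(lia)).
  destruct (Rlt_dec 0 (area_coef th (S i))); [rewrite Rabs_right | rewrite Rabs_left]; lra.
Qed.

Lemma area_sign_pm i : area_sign i = 1 \/ area_sign i = -1.
Proof. unfold area_sign; destruct (Rlt_dec 0 (area_coef th (S i))); auto. Qed.

(* Coordinate [i] belongs to vertex [i + 1]; vertices [0] and [n - 1] have height [0]. *)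
Definition chart (x : nat -> R) : nat -> R :=
  fun i => if Nat.ltb i (n - 2) then coef_root (S i) * height th x (S i) else 0.

Definition height_of (psi : nat -> R) (j : nat) : R :=
  match j with
  | O => 0
  | S j' => if Nat.ltb j' (n - 2) then psi j' / coef_root (S j') else 0
  end.

(* Vertex [v_j] rebuilt from the heights: the edge [v_i v_(i+1)] has direction
   [th (i+1)] and its length is the height increment divided by [base (i+1)]. *)
Definition vertex_of (f : R -> R) (psi : nat -> R) (j : nat) : R :=
  sumR j (fun i => (height_of psi (S i) - height_of psi i) / base (S i) * f (th (S i))).

Definition polygon_of (psi : nat -> R) : nat -> R :=
  fun i => if Nat.ltb i (2 * n)
           then vertex_of (if Nat.even i then cos else sin) psi (Nat.div2 i) else 0.

Lemma vx_polygon_of psi j : (j < n)%nat -> vx (polygon_of psi) j = vertex_of cos psi j.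
Proof.
  intros Hj. unfold vx, polygon_of. destruct (Nat.ltb_spec (2 * j) (2 * n)); [|lia].
  rewrite Nat.even_even, Nat.div2_double. reflexivity.
Qed.

Lemma vy_polygon_of psi j : (j < n)%nat -> vy (polygon_of psi) j = vertex_of sin psi j.
Proof.
  intros Hj. unfold vy, polygon_of. destruct (Nat.ltb_spec (S (2 * j)) (2 * n)); [|lia].
  rewrite Nat.even_succ, Nat.odd_even, Nat.div2_succ_double. reflexivity.
Qed.

Lemma height_vertex_of psi j : (j <= n - 1)%nat ->
  cos (th 0%nat) * vertex_of sin psi j - sin (th 0%nat) * vertex_of cos psi j = height_of psi j.
Proof.
  induction j as [|j IH]; intros Hj; [unfold vertex_of; simpl; ring|].
  unfold vertex_of in *. rewrite !sumR_S.
  transitivity (height_of psi j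
                + (height_of psi (S j) - height_of psi j) / base (S j) * base (S j));
    [rewrite <- IH by lia; unfold base, cross_dir; ring|].
  field. apply base_nz; lia.
Qed.

Lemma height_of_last psi : height_of psi (n - 1) = 0.
Proof.
  replace (n - 1)%nat with (S (n - 2)) by lia. simpl.
  destruct (Nat.ltb_spec (n - 2) (n - 2)); auto; lia.
Qed.

Lemma polygon_of_Stilde psi : Stilde n th (polygon_of psi).
Proof.
  split; [|split; [|split]].
  - intros i Hi. unfold polygon_of. destruct (Nat.ltb_spec i (2 * n)); auto; lia.
  - exists (fun i => cos (th i) * vertex_of sin psi i - sin (th i) * vertex_of cos psi i).
    intros i Hi. unfold on_line. rewrite vx_polygon_of, vy_polygon_of by auto. split; auto.
    destruct (Nat.eq_dec i (n - 1)) as [->|Hne].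
    + rewrite nxt_last, height_vertex_of, height_of_last by lia.
      unfold vertex_of; simpl; ring.
    + rewrite nxt_succ by lia. unfold vertex_of. rewrite !sumR_S. ring.
  - rewrite vx_polygon_of by lia. reflexivity.
  - rewrite vy_polygon_of by lia. reflexivity.
Qed.

Lemma height_polygon_of psi j : (j < n)%nat -> height th (polygon_of psi) j = height_of psi j.
Proof.
  intros Hj. unfold height. rewrite vx_polygon_of, vy_polygon_of by auto.
  apply height_vertex_of; lia.
Qed.

Lemma chart_polygon_of psi : in_R (n - 2) psi -> chart (polygon_of psi) = psi.
Proof.
  intros Hin. apply functional_extensionality; intros i. unfold chart.
  destruct (Nat.ltb_spec i (n - 2)); [|rewrite Hin; auto].
  rewrite height_polygon_of by lia. simpl. destruct (Nat.ltb_spec i (n - 2)); [|lia].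
  pose proof (coef_root_pos (S i) ltac:(lia) ltac:(lia)). field. lra.
Qed.

Lemma height_of_chart x : Stilde n th x -> forall j, (j <= n - 1)%nat ->
  height_of (chart x) j = height th x j.
Proof.
  intros HS j Hj. pose proof HS as [_ [HQ [H0 H1]]]. destruct j as [|j]; simpl.
  - unfold height. rewrite H0, H1. ring.
  - unfold chart. destruct (Nat.ltb_spec j (n - 2)).
    + pose proof (coef_root_pos (S j) ltac:(lia) ltac:(lia)). field. lra.
    + replace (S j) with (n - 1)%nat by lia. rewrite (is_Q_last_height n th x); auto; lia.
Qed.

Lemma vertex_of_chart x : Stilde n th x -> forall j, (j < n)%nat ->
  vertex_of cos (chart x) j = vx x j /\ vertex_of sin (chart x) j = vy x j.
Proof.
  intros HS. pose proof HS as [_ [HQ [H0 H1]]]. induction j as [|j IH]; intros Hj.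
  - unfold vertex_of; simpl; auto.
  - destruct (IH ltac:(lia)) as [I1 I2]. unfold vertex_of in *. rewrite !sumR_S, I1, I2.
    rewrite !height_of_chart by (auto; lia).
    destruct (is_Q_edge n th x j HQ Hj) as [l [E1 E2]].
    assert (L : (height th x (S j) - height th x j) / base (S j) = l).
    { unfold height, base, cross_dir in *. rewrite E1, E2.
      field. pose proof (base_nz (S j) ltac:(lia) Hj). auto. }
    rewrite L. split; lra.
Qed.

Lemma polygon_of_chart x : Stilde n th x -> polygon_of (chart x) = x.
Proof.
  intros HS. pose proof HS as [Hin _]. apply functional_extensionality; intros i.
  unfold polygon_of. destruct (Nat.ltb_spec i (2 * n)); [|rewrite Hin; auto].
  pose proof (Nat.div2_odd i) as Ei. rewrite <- Nat.negb_even in Ei.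
  assert (Hd : (Nat.div2 i < n)%nat) by (destruct (Nat.even i); simpl in Ei; lia).
  destruct (vertex_of_chart x HS (Nat.div2 i) Hd) as [V1 V2].
  destruct (Nat.even i); simpl in Ei; [rewrite V1; unfold vx | rewrite V2; unfold vy];
    f_equal; lia.
Qed.

Lemma area_polygon_of psi : area n (polygon_of psi) = sumR (n - 2) (fun i => area_sign i * psi i ^ 2).
Proof.
  rewrite area_diag by apply polygon_of_Stilde. apply sumR_ext; intros i Hi.
  rewrite height_polygon_of by lia. simpl. destruct (Nat.ltb_spec i (n - 2)); [|lia].
  rewrite area_coef_sign by auto.
  pose proof (coef_root_pos (S i) ltac:(lia) ltac:(lia)). field. lra.
Qed.

Lemma area_chart x : Stilde n th x -> area n x = sumR (n - 2) (fun i => area_sign i * chart x i ^ 2).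
Proof.
  intros HS. rewrite area_diag by auto. apply sumR_ext; intros i Hi.
  unfold chart. destruct (Nat.ltb_spec i (n - 2)); [|lia]. rewrite area_coef_sign by auto. ring.
Qed.

Lemma cont_real_vertex_of A f j : cont_real (n - 2) A (fun psi => vertex_of f psi j).
Proof.
  assert (Hh : forall i, cont_real (n - 2) A (fun psi => height_of psi i)).
  { intros [|i]; simpl; [apply cont_real_const|]. destruct (Nat.ltb_spec i (n - 2)).
    - apply cont_real_mult; [apply cont_real_coord; auto | apply cont_real_const].
    - apply cont_real_const. }
  apply (cont_real_sum (n - 2) A j
           (fun i psi => (height_of psi (S i) - height_of psi i) / base (S i) * f (th (S i)))).
  intros i _. apply cont_real_mult; [|apply cont_real_const].
  apply cont_real_mult; [apply cont_real_minus; auto | apply cont_real_const].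
Qed.

Lemma area_level_homeo_diag_quadric c : c * c = 1 ->
  homeomorphic (2 * n) (fun x => Stilde n th x /\ area n x = c)
               (n - 2) (DiagQuadric (n - 2) (fun i => c * area_sign i)).
Proof.
  intros Hc.
  assert (Hscale : forall z, sumR (n - 2) (fun i => c * area_sign i * z i ^ 2)
                             = c * sumR (n - 2) (fun i => area_sign i * z i ^ 2)).
  { intros z. rewrite <- sumR_scal. apply sumR_ext; intros; ring. }
  exists chart, polygon_of. split; [|split; [|split; [|split; [|split]]]].
  - intros x [HS HA]. split.
    + intros i Hi; unfold chart; destruct (Nat.ltb_spec i (n - 2)); auto; lia.
    + rewrite Hscale, <- area_chart, HA; auto.
  - intros psi [Hin Hq]. split; [apply polygon_of_Stilde|].
    rewrite Hscale in Hq. rewrite area_polygon_of.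
    transitivity (c * (c * sumR (n - 2) (fun i => area_sign i * psi i ^ 2)));
      [rewrite <- Rmult_assoc, Hc; ring | rewrite Hq; lra].
  - intros x [HS _]. apply polygon_of_chart; auto.
  - intros psi [Hin _]. apply chart_polygon_of; auto.
  - apply cont_on_coords; intros i Hi. unfold chart. destruct (Nat.ltb_spec i (n - 2)); [|lia].
    apply cont_real_mult; [apply cont_real_const|]. unfold height, vx, vy.
    apply cont_real_minus; apply cont_real_mult; try apply cont_real_const;
      apply cont_real_coord; lia.
  - apply cont_on_coords; intros i Hi. unfold polygon_of. destruct (Nat.ltb_spec i (2 * n)); [|lia].
    apply cont_real_vertex_of.
Qed.

End Polygon.

(** * Counting the positive area coefficients *)

Lemma ang_triangle a b c : a <> b -> b <> c -> a <> c ->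
  ang b c + ang c a - ang b a = if Rlt_dec ((c - b) * (b - a) * (c - a)) 0 then PI else 0.
Proof.
  intros Hab Hbc Hac. unfold ang.
  destruct (Rlt_dec b c); destruct (Rlt_dec c a); destruct (Rlt_dec b a);
  destruct (Rlt_dec ((c - b) * (b - a) * (c - a)) 0) as [N|N]; try lra; exfalso.
  all: destruct (Rdichotomy b c Hbc); destruct (Rdichotomy a b Hab);
         destruct (Rdichotomy a c Hac); try lra.
  all: first [ assert (0 < (c - b) * (b - a)) by nra | assert ((c - b) * (b - a) < 0) by nra ].
  all: nra.
Qed.

Lemma neg_ratio_pos_iff s1 s2 s3 d1 d2 d3 : 0 < s1 * d1 -> 0 < s2 * d2 -> 0 < s3 * d3 ->
  (0 < - s1 / (2 * (s2 * s3)) <-> d1 * d2 * d3 < 0).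
Proof.
  intros H1 H2 H3.
  assert (Hs2 : s2 <> 0) by (intro E; rewrite E in H2; lra).
  assert (Hs3 : s3 <> 0) by (intro E; rewrite E in H3; lra).
  assert (Hnz : s2 * s3 <> 0) by (apply Rmult_integral_contrapositive; auto).
  replace (- s1 / (2 * (s2 * s3))) with (- (s1 * s2 * s3) * / (2 * (s2 * s3) ^ 2))
    by (field; auto).
  assert (Hinv : 0 < / (2 * (s2 * s3) ^ 2)).
  { apply Rinv_0_lt_compat. pose proof (Rsqr_pos_lt _ Hnz). unfold Rsqr in *. nra. }
  assert (Hp : 0 < (s1 * s2 * s3) * (d1 * d2 * d3)).
  { replace ((s1 * s2 * s3) * (d1 * d2 * d3)) with ((s1 * d1) * (s2 * d2) * (s3 * d3)) by ring.
    apply Rmult_lt_0_compat; [apply Rmult_lt_0_compat|]; auto. }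
  split; intros H; nra.
Qed.

Lemma sin_diff_mul_pos a b : 0 <= a < PI -> 0 <= b < PI -> a <> b -> 0 < sin (b - a) * (b - a).
Proof.
  intros Ha Hb Hab. destruct (Rlt_dec a b).
  - pose proof (sin_gt_0 (b - a) ltac:(lra) ltac:(lra)). nra.
  - replace (sin (b - a) * (b - a)) with (sin (a - b) * (a - b))
      by (replace (b - a) with (- (a - b)) by ring; rewrite sin_neg; ring).
    pose proof (sin_gt_0 (a - b) ltac:(lra) ltac:(lra)). nra.
Qed.

Lemma cross_dir_nz a b : 0 <= a < PI -> 0 <= b < PI -> a <> b -> cross_dir a b <> 0.
Proof.
  intros Ha Hb Hab E. pose proof (sin_diff_mul_pos a b Ha Hb Hab).
  rewrite <- cross_dir_sin, E in *. lra.
Qed.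

Section Count.
Variable n : nat.
Variable th : nat -> R.
Hypothesis n_ge3 : (3 <= n)%nat.
Hypothesis th_range : forall i, (i < n)%nat -> 0 <= th i < PI.
Hypothesis th_inj : forall i j, (i < n)%nat -> (j < n)%nat -> i <> j -> th i <> th j.

Lemma base_nz_of j : (1 <= j)%nat -> (j < n)%nat -> cross_dir (th 0%nat) (th j) <> 0.
Proof. intros. apply cross_dir_nz; try apply th_range; try apply th_inj; lia. Qed.

Lemma succ_nz_of j : (1 <= j)%nat -> (S j < n)%nat -> cross_dir (th j) (th (S j)) <> 0.
Proof. intros. apply cross_dir_nz; try apply th_range; try apply th_inj; lia. Qed.

Definition partial_tsum (m : nat) : R :=
  sumR m (fun i => ang (th i) (th (S i))) + ang (th m) (th 0%nat).

Lemma area_coef_pos_iff j : (S j < n)%nat -> (1 <= j)%nat ->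
  0 < area_coef th j <->
  (th (S j) - th j) * (th j - th 0%nat) * (th (S j) - th 0%nat) < 0.
Proof.
  intros Hj Hj1. unfold area_coef. rewrite !cross_dir_sin.
  apply neg_ratio_pos_iff; apply sin_diff_mul_pos; try apply th_range; try apply th_inj; lia.
Qed.

(* Adding the line [s_(m+2)] to the cycle increases [t] by [pi] exactly when the
   corresponding area coefficient is positive. *)
Lemma partial_tsum_count m : (S m <= n - 1)%nat ->
  partial_tsum (S m) = PI + PI * INR (count_pos (area_sign th) m).
Proof.
  induction m as [|m IH]; intros Hm.
  - unfold partial_tsum, ang; simpl.
    pose proof (th_inj 0%nat 1%nat ltac:(lia) ltac:(lia) ltac:(lia)).
    destruct (Rlt_dec (th 0%nat) (th 1%nat)); destruct (Rlt_dec (th 1%nat) (th 0%nat)); lra.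
  - assert (E : partial_tsum (S (S m)) = partial_tsum (S m)
              + (ang (th (S m)) (th (S (S m))) + ang (th (S (S m))) (th 0%nat)
                 - ang (th (S m)) (th 0%nat)))
      by (unfold partial_tsum; rewrite (sumR_S (S m)); ring).
    rewrite E, IH, ang_triangle by (lia || apply th_inj; lia).
    simpl count_pos.
    assert (Hsign : 0 < area_sign th m <-> 0 < area_coef th (S m)).
    { unfold area_sign. destruct (Rlt_dec 0 (area_coef th (S m))); split; intros; lra. }
    rewrite (area_coef_pos_iff (S m)) in Hsign by lia.
    destruct (Rlt_dec 0 (area_sign th m));
      destruct (Rlt_dec ((th (S (S m)) - th (S m)) * (th (S m) - th 0%nat)
                         * (th (S (S m)) - th 0%nat)) 0);
      try tauto; rewrite ?S_INR; ring.
Qed.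

Lemma tsum_partial : tsum n th = partial_tsum (n - 1).
Proof.
  unfold tsum, partial_tsum. replace n with (S (n - 1)) at 1 by lia.
  rewrite sumR_S, nxt_last by lia. f_equal. apply sumR_ext. intros i Hi.
  rewrite nxt_succ by lia. reflexivity.
Qed.

Lemma tsum_count k : tsum n th = INR k * PI -> k = S (count_pos (area_sign th) (n - 2)).
Proof.
  intros Ht. rewrite tsum_partial in Ht. replace (n - 1)%nat with (S (n - 2)) in Ht by lia.
  rewrite partial_tsum_count in Ht by lia. apply INR_eq. rewrite S_INR.
  pose proof PI_RGT_0. apply (Rmult_eq_reg_r PI); lra.
Qed.

End Count.

Lemma cont_real_area n A : cont_real (2 * n) A (area n).
Proof.
  unfold area. apply cont_real_scal.
  apply (cont_real_sum (2 * n) A n (fun i x => vx x i * vy x (nxt n i) - vx x (nxt n i) * vy x i)).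
  intros i Hi. assert (nxt n i < n)%nat by (unfold nxt; apply Nat.mod_upper_bound; lia).
  unfold vx, vy. apply cont_real_minus; apply cont_real_mult; apply cont_real_coord; lia.
Qed.

Lemma Sconf_split n th x : Sconf n th x <-> Sminus n th x \/ Splus n th x.
Proof.
  unfold Sconf, Sminus, Splus. split.
  - intros [HS HA]. destruct (Rle_dec 0 (area n x)); [right | left]; split; auto;
      [rewrite Rabs_right in HA | rewrite Rabs_left in HA]; lra.
  - intros [[HS HA]|[HS HA]]; split; auto; rewrite HA;
      [rewrite Rabs_left | rewrite Rabs_right]; lra.
Qed.

Lemma area_level_homeo_SphDisc n th c a b : (3 <= n)%nat ->
  (forall j, (1 <= j)%nat -> (j < n)%nat -> cross_dir (th 0%nat) (th j) <> 0) ->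
  (forall j, (1 <= j)%nat -> (S j < n)%nat -> cross_dir (th j) (th (S j)) <> 0) ->
  c * c = 1 -> count_pos (fun i => c * area_sign th i) (n - 2) = a -> (a + b = n - 2)%nat ->
  homeomorphic (2 * n) (fun x => Stilde n th x /\ area n x = c) (a + b) (SphDisc a b).
Proof.
  intros Hn Hbase Hsucc Hc Ha Hab.
  apply (homeo_trans _ _ (n - 2) (DiagQuadric (n - 2) (fun i => c * area_sign th i)));
    [apply area_level_homeo_diag_quadric; auto|].
  apply (homeo_trans _ _ (a + b) (Quadric a b)); [|apply quadric_homeo_SphDisc].
  rewrite Hab. replace b with (n - 2 - a)%nat by lia. rewrite <- Ha.
  apply diag_quadric_homeo_quadric. intros j _.
  assert (Hpm : c = 1 \/ c = -1).
  { destruct (Rmult_integral (c - 1) (c + 1)); [nra | left | right]; lra. }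
  destruct Hpm as [-> | ->]; destruct (area_sign_pm th j) as [E|E]; rewrite E;
    [left | right | right | left]; ring.
Qed.

Theorem mainTheorem3 (n k : nat) (theta : nat -> R)
  (Hn : (3 <= n)%nat)
  (Hth : forall i, (i < n)%nat -> 0 <= theta i < PI)
  (Hnp : forall i j, (i < n)%nat -> (j < n)%nat -> i <> j -> theta i <> theta j)
  (Ht : tsum n theta = INR k * PI) :
  homeomorphic (2 * n) (Sminus n theta)
               ((n - k - 1) + (k - 1)) (SphDisc (n - k - 1) (k - 1)) /\
  homeomorphic (2 * n) (Splus n theta)
               ((k - 1) + (n - k - 1)) (SphDisc (k - 1) (n - k - 1)) /\
  homeomorphic (2 * n) (Sconf n theta)
               (S (n - 2)) (DisjU (n - k - 1) (k - 1) (k - 1) (n - k - 1)).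
Proof.
  pose proof (base_nz_of n theta Hn Hth Hnp) as Hbase.
  pose proof (succ_nz_of n theta Hn Hth Hnp) as Hsucc.
  pose proof (tsum_count n theta Hn Hth Hnp k Ht) as Hk.
  pose proof (count_pos_le (area_sign theta) (n - 2)).
  pose proof (count_pos_opp (area_sign theta) (n - 2) (fun j _ => area_sign_pm theta j)).
  assert (Hminus : homeomorphic (2 * n) (Sminus n theta)
                     ((n - k - 1) + (k - 1)) (SphDisc (n - k - 1) (k - 1)))
    by (apply area_level_homeo_SphDisc; auto; try lra; try lia).
  assert (Hplus : homeomorphic (2 * n) (Splus n theta)
                    ((k - 1) + (n - k - 1)) (SphDisc (k - 1) (n - k - 1))).
  { apply area_level_homeo_SphDisc; auto; try lra; try lia.
    rewrite (count_pos_ext _ (area_sign theta)) by (intros; ring). lia. }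
  split; [exact Hminus | split; [exact Hplus |]].
  apply (homeo_set_ext _ _ (fun x => Sminus n theta x \/ Splus n theta x));
    [intros; symmetry; apply Sconf_split|].
  replace (S (n - 2)) with (S ((n - k - 1) + (k - 1))) by lia.
  rewrite Nat.add_comm in Hplus.
  apply (homeo_disj_union _ _ _ _ _ _ (area n)); auto.
  - apply cont_real_area.
  - intros x [_ HA]; auto.
  - intros x [_ HA]; auto.
Qed.
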